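(* For all integers $q\ge2$ and $n\ge\delta\ge2$ there exists a subset $\mathcal A\subseteq J_q(n)$ with $$|\mathcal A|\ge\frac{\binom{n+q-1}{n}}{(2q+2)^{\delta-2}(2q+1)}$$ such that $d_L(\mathbf u,\mathbf v)\ge 2\delta$ for all distinct $\mathbf u,\mathbf v\in\mathcal A$.
   Context: $J_q(n)=\{(a_1,\dots,a_q)\in\mathbb Z_{\ge0}^q:\ \sum_{i=1}^q a_i=n\}$. The $L^1$-distance is $d_L(\mathbf u,\mathbf v)=\sum_{i=1}^q|u_i-v_i|$. *)

From mathcomp Require Import all_boot all_order all_algebra.
Set Implicit Arguments. Unset Strict Implicit. Unset Printing Implicit Defensive.

Definition vec (q : nat) := {ffun 'I_q -> nat}.

Definition inJ (q n : nat) (a : vec q) : bool := (\sum_(i < q) a i == n)%N.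

Definition dL (q : nat) (u v : vec q) : nat := (\sum_(i < q) `|u i - v i|)%N.

From mathcomp Require Import all_boot all_order all_algebra all_field.
From mathcomp Require Import zify.
Import GRing.Theory Num.Theory.
Set Implicit Arguments. Unset Strict Implicit. Unset Printing Implicit Defensive.
Local Open Scope ring_scope.

(* Fix a finite field F with q < |F| and distinct elements a, c_1, ..., c_q, and
   map u in J_q(n) to the monic polynomial P_u = prod_i (X - c_i)^(u_i) of degree n.
   If P_u and P_v agree modulo (X - a)^h, then after cancelling the common factor
   prod_i (X - c_i)^(min(u_i, v_i)), which is coprime to X - a, the difference of
   the two remaining monic polynomials of degree s = d_L(u, v)/2 is a nonzero multiple
   of (X - a)^h, so h < s.  Colouring J_q(n) by the residue of P_u modulo (X - a)^h,
   one of the |F|^h colour classes is a code of size at least |J_q(n)| / |F|^h and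
   minimum distance at least 2(h + 1).  Taking |F| a power of two in (q, 2q] and
   h = delta - 1 gives the bound. *)

Section MultPoly.

Variables (F : fieldType) (q : nat) (c : 'I_q -> F).

Definition mult_poly (e : 'I_q -> nat) : {poly F} :=
  \prod_(i < q) ('X - (c i)%:P) ^+ e i.

Lemma eq_mult_poly e1 e2 : e1 =1 e2 -> mult_poly e1 = mult_poly e2.
Proof. by move=> e12; apply: eq_bigr => i _; rewrite e12. Qed.

Lemma mult_poly_monic e : mult_poly e \is monic.
Proof. by apply: monic_prod => i _; apply/monic_exp/monicXsubC. Qed.

Lemma size_mult_poly e : size (mult_poly e) = (\sum_(i < q) e i).+1%N.
Proof.
rewrite size_prod; last by move=> i _; rewrite expf_neq0 ?polyXsubC_eq0.
under eq_bigr do rewrite size_exp_XsubC -addn1.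
rewrite big_split /= sum1_card card_ord; lia.
Qed.

Lemma mult_polyD e1 e2 :
  mult_poly (fun i => e1 i + e2 i)%N = mult_poly e1 * mult_poly e2.
Proof. by rewrite -big_split; apply: eq_bigr => i _; rewrite exprD. Qed.

Lemma root_mult_poly e i : injective c -> root (mult_poly e) (c i) = (0 < e i)%N.
Proof.
move=> c_inj; rewrite /root horner_prod; apply/prodf_eq0/idP => [[j _]|e_gt0].
  by rewrite hornerE expf_eq0 hornerXsubC subr_eq0 => /andP[ej /eqP/c_inj ->].
by exists i => //; rewrite hornerE expf_eq0 hornerXsubC subrr eqxx andbT.
Qed.

Lemma coprimep_mult_poly_XsubC a e :
  (forall i, c i != a) -> coprimep (mult_poly e) ('X - a%:P).
Proof.
move=> ca; rewrite coprimep_XsubC /root horner_prod; apply/prodf_neq0 => i _.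
by rewrite hornerE expf_neq0 // hornerXsubC subr_eq0 eq_sym.
Qed.

End MultPoly.

Lemma size_subr_monic (F : fieldType) (p r : {poly F}) s :
  p \is monic -> r \is monic -> size p = s.+1 -> size r = s.+1 ->
  (size (p - r)%R <= s)%N.
Proof.
move=> /monicP p_lead /monicP r_lead sp sr; apply/leq_sizeP => j.
rewrite leq_eqVlt coefB => /predU1P[<-|s_lt_j].
  by move: p_lead r_lead; rewrite !lead_coefE sp sr => -> ->; rewrite subrr.
by rewrite !nth_default ?subrr ?sp ?sr.
Qed.

Lemma sum_subn_minnC q (u v : 'I_q -> nat) : (\sum_i u i = \sum_i v i)%N ->
  (\sum_i (u i - minn (u i) (v i)) = \sum_i (v i - minn (v i) (u i)))%N.
Proof.
have split_sum (w z : 'I_q -> nat) :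
    (\sum_i w i = \sum_i minn (w i) (z i) + \sum_i (w i - minn (w i) (z i)))%N.
  by rewrite -big_split; apply: eq_bigr => i _ /=; rewrite subnKC ?geq_minl.
have sum_minnC : (\sum_i minn (v i) (u i) = \sum_i minn (u i) (v i))%N.
  by apply: eq_bigr => i _; rewrite minnC.
by have := split_sum u v; have := split_sum v u; lia.
Qed.

Lemma dL_sum_subn_minn q (u v : vec q) : (\sum_i u i = \sum_i v i)%N ->
  dL u v = (2 * \sum_i (u i - minn (u i) (v i)))%N.
Proof.
move/sum_subn_minnC => sum_eq; rewrite /dL mul2n -addnn {2}sum_eq.
by rewrite -big_split; apply: eq_bigr => i _ /=; lia.
Qed.

Lemma modp_mult_poly_ltn_sum_subn_minn (F : fieldType) q (c : 'I_q -> F) (a : F) h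
    (u v : vec q) :
  injective c -> (forall i, c i != a) -> (\sum_i u i = \sum_i v i)%N ->
  mult_poly c u %% ('X - a%:P) ^+ h = mult_poly c v %% ('X - a%:P) ^+ h ->
  u != v -> (h < \sum_i (u i - minn (u i) (v i)))%N.
Proof.
move=> c_inj ca suv eq_mod neq_uv.
pose m i := minn (u i) (v i).
pose eu i := (u i - minn (u i) (v i))%N; pose ev i := (v i - minn (v i) (u i))%N.
have Pu : mult_poly c u = mult_poly c m * mult_poly c eu.
  by rewrite -mult_polyD; apply: eq_mult_poly => i; rewrite subnKC ?geq_minl.
have Pv : mult_poly c v = mult_poly c m * mult_poly c ev.
  by rewrite -mult_polyD; apply: eq_mult_poly => i; rewrite /m minnC subnKC ?geq_minl.
have sum_e : (\sum_i ev i = \sum_i eu i)%N by rewrite (sum_subn_minnC suv).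
have [i0 neq_i0] : exists i, u i != v i.
  apply/existsP; apply: contraNT neq_uv => /existsPn eq_uv.
  by apply/eqP/ffunP => i; apply/eqP/negPn/eq_uv.
have nz_diff : mult_poly c eu - mult_poly c ev != 0.
  rewrite subr_eq0; apply/negP => /eqP eq_e.
  have := root_mult_poly eu i0 c_inj; rewrite eq_e root_mult_poly // /eu /ev.
  by move: neq_i0; lia.
have dvd_diff : ('X - a%:P) ^+ h %| mult_poly c eu - mult_poly c ev.
  have cop : coprimep (('X - a%:P) ^+ h) (mult_poly c m).
    by rewrite coprimep_sym coprimep_expr ?coprimep_mult_poly_XsubC.
  rewrite -(Gauss_dvdpr _ cop).
  by apply/modp_eq0P; rewrite mulrBr -Pu -Pv modpD modpN eq_mod subrr.
have := dvdp_leq nz_diff dvd_diff; rewrite size_exp_XsubC => /leq_trans; apply.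
apply: size_subr_monic; rewrite ?mult_poly_monic // !size_mult_poly //.
by rewrite sum_e.
Qed.

Lemma sum_count_eq (T : Type) (K : finType) (col : T -> K) (s : seq T) :
  (\sum_(k : K) count (fun x => col x == k) s = size s)%N.
Proof.
elim: s => [|x s IHs] /=; first by rewrite big1.
rewrite big_split /= IHs (bigD1 (col x)) //= eqxx big1 // => k /negbTE.
by rewrite eq_sym => ->.
Qed.

Lemma pigeonhole_count (T : Type) (K : finType) (col : T -> K) (s : seq T) (k0 : K) :
  exists k, (size s <= #|K| * count (fun x => col x == k) s)%N.
Proof.
exists [arg max_(k > k0) count (fun x => col x == k) s].
case: arg_maxnP => // k _ k_max.
by rewrite -(sum_count_eq col) -sum_nat_const; apply: leq_sum => k' _; apply: k_max.
Qed.

(* Points of J_q(n) are the multiplicity vectors of the sorted n-tuples over 'I_q. *)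
Lemma exists_seq_J q n : (0 < q)%N ->
  exists L : seq (vec q), [/\ uniq L, all (@inJ q n) L & size L = 'C(n + q - 1, n)].
Proof.
case: q => // q _; rewrite addnS subn1 /=.
pose T := [set t : n.-tuple 'I_q.+1 | sorted leq (map val t)].
pose mult (t : n.-tuple 'I_q.+1) : vec q.+1 := [ffun i => count_mem i t].
exists [seq mult t | t <- enum T]; split.
- rewrite map_inj_in_uniq ?enum_uniq // => t1 t2; rewrite !mem_enum !inE => s1 s2 e12.
  have perm_t12 : perm_eq t1 t2.
    by apply/allP => x _; apply/eqP; move/ffunP/(_ x): e12; rewrite !ffunE.
  have := sorted_eq leq_trans anti_leq s1 s2 (perm_map val perm_t12).
  by move/(inj_map val_inj)/val_inj.
- apply/allP => f /mapP [t _ ->]; apply/eqP.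
  by under eq_bigr do rewrite ffunE; rewrite (sum_count_eq id) size_tuple.
- by rewrite size_map -cardE card_sorted_tuples.
Qed.

Lemma exists_finField_card q : (0 < q)%N -> exists F : finFieldType, (q < #|F| <= q.*2)%N.
Proof.
move=> q_gt0; pose k := (trunc_log 2 q).+1.
have [F _ card_F] := @pPrimePowerField 2 k erefl erefl.
exists F; rewrite card_F trunc_log_ltn //= expnS mul2n leq_double.
exact: trunc_logP.
Qed.

Lemma exists_code_J (F : finFieldType) q n h : (0 < q < #|F|)%N ->
  exists A : seq (vec q),
    [/\ uniq A, all (@inJ q n) A, ('C(n + q - 1, n) <= #|F| ^ h * size A)%N
      & forall u v, u \in A -> v \in A -> u != v -> (2 * h.+1 <= dL u v)%N].
Proof.
move=> /andP[q_gt0 q_lt_F].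
pose f := @enum_val F (mem predT) \o widen_ord q_lt_F.
pose a := f ord0; pose c (i : 'I_q) := f (lift ord0 i).
have f_inj : injective f.
  by move=> i j /enum_val_inj /(congr1 (@nat_of_ord _)) /(@ord_inj q.+1).
have c_inj : injective c by apply: inj_comp f_inj (@lift_inj _ ord0).
have ca i : c i != a by rewrite (inj_eq f_inj) eq_sym neq_lift.
pose M : {poly F} := ('X - a%:P) ^+ h.
pose col (u : vec q) : 'rV[F]_h := poly_rV (mult_poly c u %% M).
have [L [uniq_L J_L size_L]] := exists_seq_J n q_gt0.
have [k size_k] := pigeonhole_count col L 0.
exists [seq u <- L | col u == k]; split.
- exact: filter_uniq.
- by apply/allP => u; rewrite mem_filter => /andP[_ /(allP J_L)].
- by rewrite -size_L size_filter (leq_trans size_k) // card_mx mul1n.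
move=> u v; rewrite !mem_filter => /andP[/eqP col_u u_L] /andP[/eqP col_v v_L] neq_uv.
have sum_uv : (\sum_i u i = \sum_i v i)%N.
  by move: (allP J_L u u_L) (allP J_L v v_L); rewrite /inJ => /eqP -> /eqP ->.
have size_mod w : (size (mult_poly c w %% M)%R <= h)%N.
  by rewrite -ltnS -(size_exp_XsubC h a) ltn_modp expf_neq0 ?polyXsubC_eq0.
have eq_mod : mult_poly c u %% M = mult_poly c v %% M.
  rewrite -(poly_rV_K (size_mod u)) -(poly_rV_K (size_mod v)); congr rVpoly.
  exact: etrans col_u (esym col_v).
by rewrite dL_sum_subn_minn // leq_mul2l (modp_mult_poly_ltn_sum_subn_minn c_inj ca).
Qed.

Theorem corollary4p4 (q n delta : nat) :
  (2 <= q)%N -> (2 <= delta)%N -> (delta <= n)%N ->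
  exists A : seq (vec q),
    [/\ uniq A,
        all (@inJ q n) A,
        ('C(n + q - 1, n))%:R
           / (((2 * q + 2) ^ (delta - 2))%N%:R * (2 * q + 1)%N%:R)
           <= (size A)%:R :> rat
      & forall u v, u \in A -> v \in A -> u != v -> (2 * delta <= dL u v)%N].
Proof.
case: delta => [|[|e]] // q_ge2 _ _; have q_gt0 : (0 < q)%N by apply: leq_trans q_ge2.
have [F /andP[q_lt_F F_le_2q]] := exists_finField_card q_gt0.
have /(exists_code_J n e.+1)[A [uniq_A J_A size_A dist_A]] : (0 < q < #|F|)%N.
  by rewrite q_gt0.
exists A; split => //.
have denom_gt0 : 0 < ((2 * q + 2) ^ e)%:R * (2 * q + 1)%:R :> rat.
  by rewrite -natrM ltr0n muln_gt0 expn_gt0 !addn_gt0 orbT.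
have F_le k : (#|F| <= 2 * q + k)%N by rewrite (leq_trans F_le_2q) // -mul2n leq_addr.
rewrite subn2 /= ler_pdivrMr // -!natrM ler_nat (leq_trans size_A) //.
rewrite mulnC leq_mul2l expnS mulnC; apply/orP; right; apply: leq_mul => //.
by case: e {dist_A size_A denom_gt0} => // e; rewrite leq_exp2r.
Qed.
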